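(* Assume GCH. Let $F:[\aleph_\omega]^\omega\to[[\aleph_\omega]^\omega]^\omega$ be any function. Then there is an enumeration $\{a_{\alpha,j}:\alpha<\aleph_{\omega+1},\ j<\omega_1\}$ of $[\aleph_\omega]^\omega$ without repetition such that for each $\alpha<\aleph_{\omega+1}$ and $j<\omega_1$: if $x\in[a_{\alpha,j}]^\omega$ then $F(x)\subseteq\{a_{\eta,i}:\eta\le\alpha,\ i<\omega_1\}$.
   Context: For a set $S$, $[S]^\omega$ denotes the family of countably infinite subsets of $S$. *)

From Stdlib Require Import List.

Definition pset (T : Type) := T -> Prop.
Definition full (T : Type) : pset T := fun _ => True.
Definition subset {T : Type} (X Y : pset T) := forall x, X x -> Y x.

Definition card_le {T U : Type} (X : pset T) (Y : pset U) :=
  exists f : T -> U, (forall x, X x -> Y (f x)) /\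
    (forall x y, X x -> X y -> f x = f y -> x = y).

Definition card_eq {T U : Type} (X : pset T) (Y : pset U) :=
  exists f : T -> U, (forall x, X x -> Y (f x)) /\
    (forall x y, X x -> X y -> f x = f y -> x = y) /\
    (forall y, Y y -> exists x, X x /\ f x = y).

Definition card_lt {T U : Type} (X : pset T) (Y : pset U) :=
  card_le X Y /\ ~ card_le Y X.

Definition countable {T : Type} (X : pset T) := card_le X (full nat).
Definition infinite {T : Type} (X : pset T) := card_le (full nat) X.
Definition ctbl_inf {T : Type} (X : pset T) := card_eq (full nat) X.

Definition ctbl_subsets {T : Type} (S : pset T) : pset (pset T) :=
  fun x => ctbl_inf x /\ subset x S.

(* Generalized continuum hypothesis: for every infinite T, every cardinal
   between |T| and |P(T)| (represented by a family of subsets of T)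
   equals one of the two. *)
Definition GCH : Prop :=
  forall (T : Type) (S : pset (pset T)),
    infinite (full T) -> card_le (full T) S ->
    card_eq S (full T) \/ card_eq S (full (pset T)).

Definition is_well_order {W : Type} (lt : W -> W -> Prop) :=
  (forall a, ~ lt a a) /\
  (forall a b c, lt a b -> lt b c -> lt a c) /\
  (forall a b, lt a b \/ a = b \/ lt b a) /\
  well_founded lt.

(* |A| = aleph_omega : A is uncountable, the infinite cardinals below |A|
   have no largest element, and below any cardinal < |A| there are only
   finitely many infinite cardinals. *)
Definition is_aleph_omega (A : Type) :=
  ~ countable (full A) /\
  (forall S : pset A, card_lt S (full A) ->
     exists S' : pset A, card_lt S S' /\ card_lt S' (full A)) /\
  (forall S : pset A, card_lt S (full A) ->
     exists l : list (pset A), forall X, subset X S -> infinite X ->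
       exists Y, In Y l /\ card_eq X Y).

Definition is_omega1 {O : Type} (lt : O -> O -> Prop) :=
  is_well_order lt /\ ~ countable (full O) /\
  (forall b, countable (fun a => lt a b)).

Definition is_succ_card_order {W : Type} (lt : W -> W -> Prop) (A : Type) :=
  is_well_order lt /\ ~ card_le (full W) (full A) /\
  (forall b, card_le (fun a => lt a b) (full A)).

From Stdlib Require Import Classical ClassicalEpsilon FunctionalExtensionality
  PropExtensionality List Arith Lia Wellfounded.

(* Under GCH, 2^aleph_0 = aleph_1 and 2^aleph_omega = aleph_(omega+1), while Koenig's
   theorem gives |[aleph_omega]^omega| > aleph_omega since aleph_omega has countable
   cofinality; so |[aleph_omega]^omega| = aleph_(omega+1).  For countable y, the set G(y)
   of all members of the F(x), x in [y]^omega, has size at most aleph_1.  By recursion on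
   alpha < aleph_(omega+1), level alpha is the closure under G of aleph_1 fresh sets together
   with the alpha-th set of a fixed enumeration of [aleph_omega]^omega, minus the earlier
   levels.  The earlier levels have size at most aleph_omega in total, so fresh sets always
   exist; hence every level has size aleph_1, the levels partition [aleph_omega]^omega, and
   enumerating each level in type omega_1 gives the a_(alpha,j). *)

Definition seg {V : Type} (lt : V -> V -> Prop) (v : V) : pset V := fun u => lt u v.

Definition prodp {T U : Type} (X : pset T) (Y : pset U) : pset (T * U) :=
  fun p => X (fst p) /\ Y (snd p).

Definition bigU {J T : Type} (I : pset J) (X : J -> pset T) : pset T :=
  fun z => exists y, I y /\ X y z.

Definition finite {T : Type} (X : pset T) := exists l : list T, forall u, X u -> In u l.

Definition card_idem {T : Type} (Z : pset T) := infinite Z /\ card_le (prodp Z Z) Z.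

Lemma pset_ext {T : Type} (P Q : pset T) : (forall x, P x <-> Q x) -> P = Q.
Proof.
  intros H. apply functional_extensionality; intros x.
  apply propositional_extensionality, H.
Qed.

Lemma Fix_unfold {V P : Type} (lt : V -> V -> Prop) (wf : well_founded lt)
  (step : forall x, (forall y, lt y x -> P) -> P) (x : V) :
  Fix wf (fun _ => P) step x = step x (fun y _ => Fix wf (fun _ => P) step y).
Proof.
  apply (Fix_eq wf (fun _ => P) step). intros v g h Hgh. f_equal.
  apply functional_extensionality_dep; intros y.
  apply functional_extensionality_dep; intros p. apply Hgh.
Qed.

Lemma well_founded_min {T : Type} (R : T -> T -> Prop) (wf : well_founded R)
  (P : pset T) (x : T) : P x -> exists m, P m /\ forall y, R y m -> ~ P y.
Proof.
  induction x as [x IH] using (well_founded_ind wf). intros Px.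
  destruct (classic (exists y, R y x /\ P y)) as [[y [Ry Py]]|N].
  - exact (IH y Ry Py).
  - exists x. split; auto. intros y Ry Py. apply N; eauto.
Qed.

Lemma card_le_refl {T : Type} (X : pset T) : card_le X X.
Proof. exists (fun x => x); split; auto. Qed.

Lemma card_le_trans {T U V : Type} (X : pset T) (Y : pset U) (Z : pset V) :
  card_le X Y -> card_le Y Z -> card_le X Z.
Proof.
  intros [f [Hf1 Hf2]] [g [Hg1 Hg2]]. exists (fun x => g (f x)); split; auto.
Qed.

Lemma card_le_subset {T : Type} (X Y : pset T) : subset X Y -> card_le X Y.
Proof. intros H; exists (fun x => x); split; auto. Qed.

Lemma card_le_of_surj {T U : Type} (iT : inhabited T) (X : pset T) (Y : pset U)
  (f : T -> U) : (forall y, Y y -> exists x, X x /\ f x = y) -> card_le Y X.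
Proof.
  intros H. exists (fun y => epsilon iT (fun x => X x /\ f x = y)). split.
  - intros y Hy. exact (proj1 (epsilon_spec iT _ (H y Hy))).
  - intros y1 y2 H1 H2 E.
    rewrite <- (proj2 (epsilon_spec iT _ (H y1 H1))),
            <- (proj2 (epsilon_spec iT _ (H y2 H2))), E.
    reflexivity.
Qed.

Lemma card_eq_le {T U : Type} (X : pset T) (Y : pset U) : card_eq X Y -> card_le X Y.
Proof. intros [f [H1 [H2 _]]]; exists f; auto. Qed.

Lemma card_eq_ge {T U : Type} (iT : inhabited T) (X : pset T) (Y : pset U) :
  card_eq X Y -> card_le Y X.
Proof. intros [f [_ [_ H]]]. exact (card_le_of_surj iT X Y f H). Qed.

Lemma card_le_prodp {T T' U U' : Type} (X : pset T) (X' : pset T') (Y : pset U)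
  (Y' : pset U') : card_le X X' -> card_le Y Y' -> card_le (prodp X Y) (prodp X' Y').
Proof.
  intros [f [Hf1 Hf2]] [g [Hg1 Hg2]].
  exists (fun p => (f (fst p), g (snd p))). split.
  - intros [a b] [Ha Hb]; split; simpl; auto.
  - intros [a b] [c d] [Ha Hb] [Hc Hd] E. simpl in *. injection E; intros E2 E1.
    f_equal; auto.
Qed.

Lemma card_le_In_nat {T : Type} (l : list T) : card_le (fun z => In z l) (full nat).
Proof.
  set (pos := fun z => epsilon (inhabits 0) (fun k => nth_error l k = Some z)).
  assert (Hpos : forall z, In z l -> nth_error l (pos z) = Some z).
  { intros z Hz. apply epsilon_spec, In_nth_error, Hz. }
  exists pos. split; [intros; exact I|].
  intros a b Ha Hb E. apply Hpos in Ha, Hb. rewrite E in Ha. congruence.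
Qed.

(* [h] is [f] on the points of [X] whose backward [g o f]-orbit starts outside
   the range of [g], and [g^-1] on the others. *)
Lemma schroeder_bernstein {T U : Type} (iU : inhabited U) (X : pset T) (Y : pset U) :
  card_le X Y -> card_le Y X -> card_eq X Y.
Proof.
  intros [f [Hf1 Hf2]] [g [Hg1 Hg2]].
  set (Cn := fix Cn n : pset T := match n with
     | 0 => fun x => X x /\ ~ exists y, Y y /\ g y = x
     | S n => fun x => exists x', Cn n x' /\ g (f x') = x end).
  assert (CX : forall n x, Cn n x -> X x).
  { induction n; simpl; intros x H; [apply H|].
    destruct H as [x' [H1 <-]]. apply Hg1, Hf1, IHn, H1. }
  set (C := fun x => exists n, Cn n x).
  set (ginv := fun x => epsilon iU (fun y => Y y /\ g y = x)).
  assert (Hginv : forall x, X x -> ~ C x -> Y (ginv x) /\ g (ginv x) = x).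
  { intros x Hx HC. apply (epsilon_spec iU (fun y => Y y /\ g y = x)).
    apply NNPP; intros N. apply HC. exists 0. simpl. split; auto. }
  set (h := fun x => if excluded_middle_informative (C x) then f x else ginv x).
  exists h. split; [|split].
  - intros x Hx. unfold h. destruct (excluded_middle_informative (C x)) as [c|c].
    + apply Hf1, Hx.
    + apply (Hginv x Hx c).
  - intros a b Ha Hb E. unfold h in E.
    destruct (excluded_middle_informative (C a)) as [ca|ca];
    destruct (excluded_middle_informative (C b)) as [cb|cb].
    + apply Hf2; auto.
    + exfalso. destruct ca as [n Hn]. apply cb. exists (S n). exists a. split; auto.
      rewrite E. apply (Hginv b Hb cb).
    + exfalso. destruct cb as [n Hn]. apply ca. exists (S n). exists b. split; auto.
      rewrite <- E. apply (Hginv a Ha ca).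
    + rewrite <- (proj2 (Hginv a Ha ca)), <- (proj2 (Hginv b Hb cb)), E. reflexivity.
  - intros y Hy. destruct (classic (C (g y))) as [[[|n] Hn]|c].
    + exfalso. apply (proj2 Hn). exists y; auto.
    + destruct Hn as [x [Hx E]]. exists x. split; [apply (CX n x Hx)|].
      unfold h. destruct (excluded_middle_informative (C x)) as [cx|cx].
      * apply Hg2; auto. apply Hf1, (CX n x Hx).
      * exfalso. apply cx. exists n; auto.
    + exists (g y). split; [apply Hg1, Hy|]. unfold h.
      destruct (excluded_middle_informative (C (g y))) as [cx|cx]; [contradiction|].
      destruct (Hginv (g y) (Hg1 y Hy) cx) as [H1 H2]. apply Hg2; auto.
Qed.

Lemma cantor {T : Type} : ~ card_le (full (pset T)) (full T).
Proof.
  intros [g [_ Hg]].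
  set (D := fun t => exists P, g P = t /\ ~ P t).
  assert (HD : D (g D) <-> ~ D (g D)).
  { split.
    - intros [P [E HP]]. assert (P = D) as -> by (apply Hg; unfold full; auto). exact HP.
    - intros H. exists D; auto. }
  tauto.
Qed.

Lemma finite_not_infinite {T : Type} (X : pset T) : finite X -> ~ infinite X.
Proof.
  intros [l Hl] [f [Hf1 Hf2]].
  assert (ND : NoDup (map f (seq 0 (S (length l))))).
  { apply NoDup_map_NoDup_ForallPairs.
    - intros a b _ _ E. apply Hf2; unfold full; auto.
    - apply seq_NoDup. }
  assert (INC : incl (map f (seq 0 (S (length l)))) l).
  { intros y Hy. apply in_map_iff in Hy. destruct Hy as [k [<- _]]. apply Hl, Hf1. exact I. }
  pose proof (NoDup_incl_length ND INC) as HL.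
  rewrite length_map, length_seq in HL. lia.
Qed.

Lemma finite_prodp {T U : Type} (X : pset T) (Y : pset U) :
  finite X -> finite Y -> finite (prodp X Y).
Proof.
  intros [l1 H1] [l2 H2]. exists (list_prod l1 l2). intros [a b] [Ha Hb].
  apply in_prod; auto.
Qed.

Lemma pigeonhole_list {T : Type} (l : list T) (P : nat -> T -> Prop) :
  (forall n, exists Y, In Y l /\ P n Y) -> exists a b Y, a < b /\ P a Y /\ P b Y.
Proof.
  intros H. set (f := fun n => proj1_sig (constructive_indefinite_description _ (H n))).
  assert (Hf : forall n, In (f n) l /\ P n (f n)).
  { intros n. exact (proj2_sig (constructive_indefinite_description _ (H n))). }
  apply NNPP; intros N. apply (finite_not_infinite (fun Y => In Y l)); [exists l; auto|].
  exists f. split; [intros n _; apply Hf|].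
  intros a b _ _ E. destruct (Nat.lt_trichotomy a b) as [h|[h|h]]; auto; exfalso; apply N.
  - exists a, b, (f a). rewrite E at 2. repeat split; auto; apply Hf.
  - exists b, a, (f b). rewrite <- E at 2. repeat split; auto; apply Hf.
Qed.

Lemma card_le_add_point {T : Type} (X : pset T) (t : T) :
  infinite X -> card_le (fun u => X u \/ u = t) X.
Proof.
  intros Hinf. destruct (classic (X t)) as [Xt|nXt].
  { apply card_le_subset. intros u [H| ->]; auto. }
  destruct Hinf as [e [He1 He2]].
  assert (einj : forall a b, e a = e b -> a = b) by (intros; apply He2; unfold full; auto).
  set (idx := fun u => epsilon (inhabits 0) (fun k => e k = u)).
  assert (Hidx : forall k, idx (e k) = k).
  { intros k. apply einj. apply (epsilon_spec (inhabits 0) (fun j => e j = e k)). eauto. }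
  (* Hilbert's hotel: shift the copy of [nat] inside [X] by one to make room for [t]. *)
  set (shift := fun u =>
    if excluded_middle_informative (exists k, e k = u) then e (S (idx u)) else u).
  assert (shift_e : forall k, shift (e k) = e (S k)).
  { intros k. unfold shift. destruct (excluded_middle_informative _) as [_|N].
    - rewrite Hidx. reflexivity.
    - exfalso. apply N. eauto. }
  assert (shift_out : forall u, ~ (exists k, e k = u) -> shift u = u).
  { intros u N. unfold shift. destruct (excluded_middle_informative _); tauto. }
  assert (shift_inj : forall u v, shift u = shift v -> u = v).
  { intros u v E. destruct (classic (exists k, e k = u)) as [[k <-]|Nu];
      destruct (classic (exists k, e k = v)) as [[k' <-]|Nv].
    - rewrite !shift_e in E. apply einj in E. congruence.
    - rewrite shift_e, (shift_out v Nv) in E. exfalso. eauto.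
    - rewrite shift_e, (shift_out u Nu) in E. exfalso. eauto.
    - rewrite (shift_out u Nu), (shift_out v Nv) in E. exact E. }
  assert (shift_ne : forall u, shift u <> e 0).
  { intros u E. destruct (classic (exists k, e k = u)) as [[k <-]|Nu].
    - rewrite shift_e in E. apply einj in E. discriminate.
    - rewrite (shift_out u Nu) in E. apply Nu. eauto. }
  exists (fun u => if excluded_middle_informative (u = t) then e 0 else shift u). split.
  - intros u Hu. destruct (excluded_middle_informative (u = t)); [apply He1; exact I|].
    destruct (classic (exists k, e k = u)) as [[k <-]|Nu].
    + rewrite shift_e. apply He1. exact I.
    + rewrite (shift_out u Nu). destruct Hu; [auto|contradiction].
  - intros u v _ _ E.
    destruct (excluded_middle_informative (u = t)), (excluded_middle_informative (v = t));
      subst; try reflexivity.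
    + exfalso. exact (shift_ne v (eq_sym E)).
    + exfalso. exact (shift_ne u E).
    + apply shift_inj, E.
Qed.

Definition lex2 {A B : Type} (R : A -> A -> Prop) (S : B -> B -> Prop) (a b : A * B) :=
  R (fst a) (fst b) \/ (fst a = fst b /\ S (snd a) (snd b)).

Lemma wf_lex2 {A B : Type} (R : A -> A -> Prop) (S : B -> B -> Prop) :
  well_founded R -> well_founded S -> well_founded (lex2 R S).
Proof.
  intros wR wS [a b]. revert b. induction (wR a) as [a _ IHa]. intros b.
  induction (wS b) as [b _ IHb]. constructor. intros [a' b'] [H|[E H]]; simpl in *.
  - apply IHa; auto.
  - subst a'. apply IHb; auto.
Qed.

Section Comparability.
Context {V : Type} (lt : V -> V -> Prop) (lt_wf : well_founded lt)
  (lt_total : forall a b, lt a b \/ a = b \/ lt b a).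

(* Send each [v] to a point of [X] not used before; either this never gets stuck,
   or at the first [v] where it does, the earlier values exhaust [X]. *)
Lemma card_le_or_ge_seg {T : Type} (iT : inhabited T) (D : pset V) (X : pset T) :
  card_le D X \/ exists v, D v /\ card_le X (fun u => D u /\ lt u v).
Proof.
  set (step := fun v (rec : forall u, lt u v -> T) =>
    epsilon iT (fun x => X x /\ forall u (h : lt u v), D u -> rec u h <> x)).
  set (f := Fix lt_wf (fun _ => T) step).
  assert (spec : forall v, (exists x, X x /\ forall u, lt u v -> D u -> f u <> x) ->
            X (f v) /\ forall u, lt u v -> D u -> f u <> f v).
  { intros v Hex. unfold f. rewrite Fix_unfold. apply (epsilon_spec iT), Hex. }
  destruct (classic (forall v, D v ->
              exists x, X x /\ forall u, lt u v -> D u -> f u <> x)) as [Hall|Hn].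
  - left. exists f. split.
    + intros v Dv. apply (spec v (Hall v Dv)).
    + intros a b Da Db E. destruct (lt_total a b) as [h|[h|h]]; auto; exfalso.
      * apply (proj2 (spec b (Hall b Db)) a h Da E).
      * apply (proj2 (spec a (Hall a Da)) b h Db (eq_sym E)).
  - right. apply not_all_ex_not in Hn. destruct Hn as [v Hv].
    apply imply_to_and in Hv. destruct Hv as [Dv Hv].
    exists v; split; auto.
    apply (card_le_of_surj (inhabits v) _ _ f).
    intros y Hy. apply NNPP; intros C. apply Hv. exists y; split; auto.
    intros u Hu Du E. apply C. exists u; auto.
Qed.

End Comparability.

Lemma infinite_of_not_countable {T : Type} (X : pset T) : ~ countable X -> infinite X.
Proof.
  intros H. assert (iT : inhabited T).
  { apply NNPP; intros N. apply H. exists (fun _ => 0). split; [intros; exact I|].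
    intros x. exfalso. exact (N (inhabits x)). }
  assert (nat_total : forall a b : nat, a < b \/ a = b \/ b < a) by (intros; lia).
  destruct (card_le_or_ge_seg lt Wf_nat.lt_wf nat_total iT (full nat) X)
    as [h|[n [_ h]]]; auto.
  exfalso. apply H. eapply card_le_trans; [exact h|].
  apply card_le_subset. intros u _. exact I.
Qed.

Section WellOrder.
Context {V : Type} (lt : V -> V -> Prop) (wo : is_well_order lt).

Let lt_irrefl : forall a, ~ lt a a := proj1 wo.
Let lt_trans : forall a b c, lt a b -> lt b c -> lt a c := proj1 (proj2 wo).
Let lt_total : forall a b, lt a b \/ a = b \/ lt b a := proj1 (proj2 (proj2 wo)).
Let lt_wf : well_founded lt := proj2 (proj2 (proj2 wo)).

Lemma infinite_or_finite_seg (m : V) : infinite (seg lt m) \/ finite (seg lt m).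
Proof.
  induction m as [m IH] using (well_founded_ind lt_wf).
  destruct (classic (exists p, lt p m /\ forall q, ~ (lt p q /\ lt q m)))
    as [[p [Hp Hmax]]|Hlim].
  - destruct (IH p Hp) as [Hi|[l Hl]].
    + left. eapply card_le_trans; [exact Hi|].
      apply card_le_subset. intros u h. exact (lt_trans _ _ _ h Hp).
    + right. exists (p :: l). intros u Hu.
      destruct (lt_total u p) as [h|[h|h]].
      * right. apply Hl. exact h.
      * left; auto.
      * exfalso. apply (Hmax u); auto.
  - destruct (classic (exists p, lt p m)) as [[p Hp]|Hempty].
    + left.
      assert (step : forall x, lt x m -> exists q, lt x q /\ lt q m).
      { intros x Hx. apply NNPP; intros C. apply Hlim. exists x; split; auto.
        intros q Hq. apply C. exists q; auto. }
      set (next := fun x => epsilon (inhabits p) (fun q => lt x q /\ lt q m)).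
      set (e := fix e n := match n with 0 => p | S n => next (e n) end).
      assert (He : forall n, lt (e n) m).
      { induction n; simpl; auto. exact (proj2 (epsilon_spec _ _ (step _ IHn))). }
      assert (Hmono : forall n k, n < k -> lt (e n) (e k)).
      { intros n k Hk. induction Hk; [|eapply lt_trans; [exact IHHk|]];
          exact (proj1 (epsilon_spec _ _ (step _ (He _)))). }
      exists e. split; [intros n _; apply He|].
      intros a b _ _ E. destruct (Nat.lt_trichotomy a b) as [h|[h|h]]; auto;
        exfalso; pose proof (Hmono _ _ h) as Hl; rewrite E in Hl; exact (lt_irrefl _ Hl).
    + right. exists nil. intros u Hu. apply Hempty. exists u; auto.
Qed.

Let lte (u v : V) := lt u v \/ u = v.

Let lte_trans a b c : lte a b -> lte b c -> lte a c.
Proof. intros [h1|h1] [h2|h2]; subst; unfold lte; eauto. Qed.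

Let wmax (x y : V) : V := if excluded_middle_informative (lt x y) then y else x.

Let wmax_ge_l x y : lte x (wmax x y).
Proof. unfold wmax, lte. destruct (excluded_middle_informative (lt x y)); auto. Qed.

Let wmax_ge_r x y : lte y (wmax x y).
Proof.
  unfold wmax, lte. destruct (excluded_middle_informative (lt x y)); auto.
  destruct (lt_total x y) as [h|[h|h]]; auto. contradiction.
Qed.

Let wmax_cases x y : wmax x y = x \/ wmax x y = y.
Proof. unfold wmax. destruct (excluded_middle_informative (lt x y)); auto. Qed.

Let godel_lt (p q : V * V) : Prop :=
  lex2 lt (lex2 lt lt) (wmax (fst p) (snd p), p) (wmax (fst q) (snd q), q).

Let godel_wf : well_founded godel_lt.
Proof.
  apply (wf_inverse_image _ _ _ (fun p => (wmax (fst p) (snd p), p))).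
  apply wf_lex2, wf_lex2; auto.
Qed.

Let godel_total : forall a b, godel_lt a b \/ a = b \/ godel_lt b a.
Proof.
  intros [a1 a2] [b1 b2]. unfold godel_lt, lex2; simpl.
  destruct (lt_total (wmax a1 a2) (wmax b1 b2)) as [h|[h|h]]; [tauto| |tauto].
  pose proof (eq_sym h).
  destruct (lt_total a1 b1) as [h1|[h1|h1]]; [tauto|subst b1|tauto].
  destruct (lt_total a2 b2) as [h2|[h2|h2]]; [tauto|subst; auto|tauto].
Qed.

Let godel_lt_max p q :
  godel_lt q p -> lte (fst q) (wmax (fst p) (snd p)) /\ lte (snd q) (wmax (fst p) (snd p)).
Proof.
  intros H. assert (Hm : lte (wmax (fst q) (snd q)) (wmax (fst p) (snd p))).
  { destruct H as [H|[H _]]; unfold lte; simpl in *; auto. }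
  split; eapply lte_trans; [apply wmax_ge_l|exact Hm|apply wmax_ge_r|exact Hm].
Qed.

(* If [b] is not a cardinal, use the induction hypothesis at a smaller equipotent
   segment.  Otherwise an initial segment of [seg b]^2 in Goedel's order that is as
   large as [seg b] lies in the square of a smaller segment [seg m \/ {m}]. *)
Lemma seg_square_le (b : V) :
  infinite (seg lt b) -> card_le (prodp (seg lt b) (seg lt b)) (seg lt b).
Proof.
  induction b as [b IH] using (well_founded_ind lt_wf). intros Hinf.
  destruct (classic (exists g, lt g b /\ card_le (seg lt b) (seg lt g)))
    as [[g [Hg Hc]]|Hcard].
  - eapply card_le_trans; [apply (card_le_prodp _ _ _ _ Hc Hc)|].
    eapply card_le_trans; [apply (IH g Hg (card_le_trans _ _ _ Hinf Hc))|].
    apply card_le_subset. intros u Hu. exact (lt_trans _ _ _ Hu Hg).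
  - assert (iV : inhabited V) by (destruct Hinf as [e _]; exact (inhabits (e 0))).
    destruct (card_le_or_ge_seg godel_lt godel_wf godel_total iV
                (prodp (seg lt b) (seg lt b)) (seg lt b)) as [H|[p [Dp Hp]]];
      [exact H|exfalso].
    set (m := wmax (fst p) (snd p)).
    assert (Hmb : lt m b).
    { destruct Dp as [D1 D2]. unfold m.
      destruct (wmax_cases (fst p) (snd p)) as [E|E]; rewrite E; auto. }
    set (Dm := fun u => lt u m \/ u = m).
    assert (Hsub : card_le (seg lt b) (prodp Dm Dm)).
    { eapply card_le_trans; [exact Hp|]. apply card_le_subset. intros q [_ Hq].
      exact (godel_lt_max p q Hq). }
    destruct (infinite_or_finite_seg m) as [Hi|[l Hl]].
    + apply Hcard. exists m. split; auto.
      eapply card_le_trans; [exact Hsub|].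
      eapply card_le_trans;
        [apply (card_le_prodp _ _ _ _ (card_le_add_point _ m Hi) (card_le_add_point _ m Hi))|].
      apply (IH m Hmb Hi).
    + assert (Hfm : finite Dm).
      { exists (m :: l). intros u [h|h]; [right; apply Hl; exact h|left; auto]. }
      apply (finite_not_infinite _ (finite_prodp _ _ Hfm Hfm)).
      exact (card_le_trans _ _ _ Hinf Hsub).
Qed.

Lemma card_idem_seg (b : V) : infinite (seg lt b) -> card_idem (seg lt b).
Proof. intros H. split; [exact H|apply seg_square_le, H]. Qed.

End WellOrder.

Lemma card_le_union_idem {T U : Type} (Z : pset U) (X Y : pset T) :
  card_idem Z -> card_le X Z -> card_le Y Z -> card_le (fun z => X z \/ Y z) Z.
Proof.
  intros [[e [He1 He2]] Hsq] [f [Hf1 Hf2]] [g [Hg1 Hg2]].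
  eapply card_le_trans; [|exact Hsq].
  exists (fun z => if excluded_middle_informative (X z) then (f z, e 0) else (g z, e 1)).
  split.
  - intros z Hz. cbv beta. destruct (excluded_middle_informative (X z)) as [x|x];
      (split; [|apply He1; exact I]); simpl; [apply Hf1, x|apply Hg1; tauto].
  - intros a b Ha Hb E. cbv beta in E.
    destruct (excluded_middle_informative (X a)) as [xa|xa];
    destruct (excluded_middle_informative (X b)) as [xb|xb];
      apply pair_equal_spec in E; destruct E as [E1 E2].
    + apply Hf2; auto.
    + discriminate (He2 0 1 I I E2).
    + discriminate (He2 1 0 I I E2).
    + apply Hg2; tauto.
Qed.

Lemma card_le_bigU_idem {J T U : Type} (iJ : inhabited J) (Z : pset U) (I : pset J)
  (X : J -> pset T) :
  card_idem Z -> card_le I Z -> (forall y, I y -> card_le (X y) Z) -> card_le (bigU I X) Z.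
Proof.
  intros [[e _] Hsq] [f [Hf1 Hf2]] HX. eapply card_le_trans; [|exact Hsq].
  assert (iF : inhabited (T -> U)) by exact (inhabits (fun _ => e 0)).
  set (code := fun y => epsilon iF (fun c => (forall x, X y x -> Z (c x)) /\
                 forall a b, X y a -> X y b -> c a = c b -> a = b)).
  assert (Hcode : forall y, I y -> (forall x, X y x -> Z (code y x)) /\
                 forall a b, X y a -> X y b -> code y a = code y b -> a = b).
  { intros y Hy. exact (epsilon_spec iF _ (HX y Hy)). }
  set (index := fun z => epsilon iJ (fun y => I y /\ X y z)).
  assert (Hindex : forall z, bigU I X z -> I (index z) /\ X (index z) z).
  { intros z Hz. exact (epsilon_spec iJ _ Hz). }
  exists (fun z => (f (index z), code (index z) z)). split.
  { intros z Hz. destruct (Hindex z Hz) as [Iz Xz].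
    split; [apply Hf1, Iz|apply (Hcode _ Iz), Xz]. }
  intros a b Ha Hb E. injection E; intros E2 E1.
  destruct (Hindex a Ha) as [Ia Xa]. destruct (Hindex b Hb) as [Ib Xb].
  apply Hf2 in E1; auto. rewrite <- E1 in E2, Xb.
  exact (proj2 (Hcode _ Ia) a b Xa Xb E2).
Qed.

Lemma succ_card_order_le {W T U : Type} (lt : W -> W -> Prop) (iU : inhabited U)
  (X : pset U) : is_succ_card_order lt T -> ~ card_le X (full T) -> card_le (full W) X.
Proof.
  intros [[_ [_ [total wf]]] [_ Hseg]] HX.
  destruct (card_le_or_ge_seg lt wf total iU (full W) X) as [H|[v [_ Hv]]]; auto.
  exfalso. apply HX. eapply card_le_trans; [exact Hv|].
  eapply card_le_trans; [|exact (Hseg v)].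
  apply card_le_subset. intros u [_ h]; exact h.
Qed.

Lemma succ_card_order_seg {W T : Type} (lt : W -> W -> Prop) :
  is_succ_card_order lt T -> inhabited T -> exists k, card_le (full T) (seg lt k).
Proof.
  intros [[_ [_ [total wf]]] [HW _]] iT.
  destruct (card_le_or_ge_seg lt wf total iT (full W) (full T)) as [H|[v [_ Hv]]].
  - contradiction.
  - exists v. eapply card_le_trans; [exact Hv|].
    apply card_le_subset. intros u [_ h]; exact h.
Qed.

Lemma succ_card_order_idem {W T : Type} (lt : W -> W -> Prop) :
  is_succ_card_order lt T -> infinite (full T) -> card_idem (full T).
Proof.
  intros hW Tinf. split; [exact Tinf|].
  assert (iT : inhabited T) by (destruct Tinf as [e _]; exact (inhabits (e 0))).
  destruct (succ_card_order_seg lt hW iT) as [k Hk].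
  eapply card_le_trans; [apply (card_le_prodp _ _ _ _ Hk Hk)|].
  eapply card_le_trans; [apply (seg_square_le lt (proj1 hW) k (card_le_trans _ _ _ Tinf Hk))|].
  apply (proj2 (proj2 hW)).
Qed.

(* GCH applied to the family of subsets of [T] indexed by [W], which sits
   strictly between [T] and [pset T]. *)
Lemma gch_pset_le {W T : Type} (hGCH : GCH) (lt : W -> W -> Prop) :
  is_succ_card_order lt T -> infinite (full T) -> card_le (full (pset T)) (full W).
Proof.
  intros hW Tinf.
  assert (iT : inhabited T) by (destruct Tinf as [e _]; exact (inhabits (e 0))).
  destruct (succ_card_order_seg lt hW iT) as [k Hk].
  destruct (succ_card_order_le lt (inhabits (full T)) (full (pset T)) hW cantor)
    as [h [_ h_inj]].
  set (S := fun P => exists w, h w = P).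
  assert (WS : card_le (full W) S).
  { exists h. split; [intros w _; exists w; auto|intros a b _ _ E; exact (h_inj a b I I E)]. }
  destruct (hGCH T S Tinf) as [H|H].
  - eapply card_le_trans; [exact Hk|].
    eapply card_le_trans; [apply card_le_subset; intros u _; exact I|exact WS].
  - exfalso. apply (proj1 (proj2 hW)). exact (card_le_trans _ _ _ WS (card_eq_le _ _ H)).
  - eapply card_le_trans; [apply (card_eq_ge (inhabits (full T)) _ _ H)|].
    apply (card_le_of_surj (inhabits k) (full W) S h). intros P [w Hw]. exists w; split; auto.
    exact I.
Qed.

Lemma injective_seq_avoiding {T : Type} (Q : nat -> pset T) :
  (forall n (L : list T), exists z, Q n z /\ ~ In z L) ->
  exists y : nat -> T, (forall n, Q n (y n)) /\ (forall a b, y a = y b -> a = b).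
Proof.
  intros H. destruct (H 0 nil) as [t0 _].
  set (pick := fun n L => epsilon (inhabits t0) (fun z => Q n z /\ ~ In z L)).
  assert (Hpick : forall n L, Q n (pick n L) /\ ~ In (pick n L) L).
  { intros n L. exact (epsilon_spec _ _ (H n L)). }
  set (prefix := fix prefix n :=
    match n with 0 => nil | S n => prefix n ++ pick n (prefix n) :: nil end).
  set (y := fun n => pick n (prefix n)).
  assert (Hin : forall k n, k < n -> In (y k) (prefix n)).
  { intros k n Hkn. induction Hkn; simpl; apply in_or_app; [right; left|left]; auto. }
  exists y. split; [intros n; apply Hpick|].
  intros a b E. destruct (Nat.lt_trichotomy a b) as [h|[h|h]]; auto; exfalso.
  - apply (proj2 (Hpick b (prefix b))). fold (y b). rewrite <- E. apply Hin, h.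
  - apply (proj2 (Hpick a (prefix a))). fold (y a). rewrite E. apply Hin, h.
Qed.

(* Koenig's diagonal argument: if [g] injected [[T]^omega] into [T], pick [y n]
   outside the union [U n] of the [x] with [g x] in the [n]-th piece; then the set
   of all [y n] would lie in one of the [U n]. *)
Lemma not_card_le_ctbl_subsets {T V : Type} (Z : nat -> pset V) (io : T -> V) :
  (forall s t, io s = io t -> s = t) -> (forall t, exists n, Z n (io t)) ->
  (forall n, card_idem (Z n)) -> (forall n, ~ card_le (full T) (Z n)) ->
  ~ card_le (ctbl_subsets (full T)) (full T).
Proof.
  intros io_inj cover idem small [g [_ g_inj]].
  set (U := fun n => bigU (fun x => ctbl_subsets (full T) x /\ Z n (io (g x))) (fun x => x)).
  assert (avoid : forall n L, exists z, ~ U n z /\ ~ In z L).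
  { intros n L. apply NNPP; intros N. apply (small n).
    eapply card_le_trans; [apply (card_le_subset (full T) (fun z => U n z \/ In z L))|].
    { intros z _. apply NNPP; intros C. apply N. exists z. tauto. }
    apply card_le_union_idem;
      [apply idem| |exact (card_le_trans _ _ _ (card_le_In_nat L) (proj1 (idem n)))].
    apply card_le_bigU_idem; [exact (inhabits (full T))|apply idem| |].
    - exists (fun x => io (g x)). split; [intros x [_ h]; exact h|].
      intros x y [Ex _] [Ey _] E. apply g_inj, io_inj; auto.
    - intros x [[Hx _] _].
      exact (card_le_trans _ _ _ (card_eq_ge (inhabits 0) _ _ Hx) (proj1 (idem n))). }
  destruct (injective_seq_avoiding (fun n z => ~ U n z) avoid) as [y [Hy y_inj]].
  set (xs := fun z => exists n, y n = z).
  assert (Exs : ctbl_subsets (full T) xs).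
  { split; [|intros z _; exact I]. exists y. split; [intros n _; exists n; auto|split].
    - intros a b _ _ E; apply y_inj, E.
    - intros z [n Hn]. exists n; split; auto; exact I. }
  destruct (cover (g xs)) as [n Hn].
  apply (Hy n). exists xs. split; [split; auto|]. exists n; auto.
Qed.

Section AlephOmega.
Variables (A : Type) (hA : is_aleph_omega A)
  (W : Type) (ltW : W -> W -> Prop) (hW : is_succ_card_order ltW A).

Let ltW_trans : forall a b c, ltW a b -> ltW b c -> ltW a c := proj1 (proj2 (proj1 hW)).
Let ltW_total : forall a b, ltW a b \/ a = b \/ ltW b a := proj1 (proj2 (proj2 (proj1 hW))).
Let ltW_wf : well_founded ltW := proj2 (proj2 (proj2 (proj1 hW))).

Let seg_le_of_le (d d' : W) : ltW d' d \/ d' = d -> card_le (seg ltW d') (seg ltW d).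
Proof.
  intros [H| ->]; [|apply card_le_refl].
  apply card_le_subset. intros u Hu. eapply ltW_trans; eauto.
Qed.

Let lt_of_not_seg_le (d d' : W) : ~ card_le (seg ltW d') (seg ltW d) -> ltW d d'.
Proof.
  intros H. destruct (ltW_total d d') as [h|[h|h]]; auto;
    exfalso; apply H, seg_le_of_le; auto.
Qed.

Section Cofinality.
Variable kap : W.
Hypothesis kap_A : card_le (full A) (seg ltW kap).
Hypothesis kap_min : forall d, ltW d kap -> ~ card_le (full A) (seg ltW d).

Let psi_spec := constructive_indefinite_description _ (proj2 (proj2 hW) kap).
Let psi : W -> A := proj1_sig psi_spec.

Let img (d : W) : pset A := fun a => exists u, ltW u d /\ psi u = a.

Let seg_le_img (d : W) : ltW d kap -> card_le (seg ltW d) (img d).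
Proof.
  intros Hd. exists psi. split.
  - intros u Hu. exists u; auto.
  - intros x y Hx Hy E. apply (proj2 (proj2_sig psi_spec)); eauto.
Qed.

Let img_le_seg (d : W) : card_le (img d) (seg ltW d).
Proof.
  apply (card_le_of_surj (inhabits d) (seg ltW d) (img d) psi).
  intros a [u [Hu E]]. exists u; auto.
Qed.

Let img_lt (d : W) : ltW d kap -> card_lt (img d) (full A).
Proof.
  intros Hd. split.
  - apply card_le_subset. intros a _; exact I.
  - intros H. apply (kap_min d Hd). exact (card_le_trans _ _ _ H (img_le_seg d)).
Qed.

Lemma exists_larger_seg (d : W) :
  ltW d kap -> exists d', ltW d' kap /\ ~ card_le (seg ltW d') (seg ltW d).
Proof.
  intros Hd. destruct (proj1 (proj2 hA) (img d) (img_lt d Hd)) as [S [[_ H2] [_ H4]]].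
  destruct (card_le_or_ge_seg ltW ltW_wf ltW_total (inhabits (psi d)) (seg ltW kap) S)
    as [H|[d' [Hd' Hc]]].
  - exfalso. exact (H4 (card_le_trans _ _ _ kap_A H)).
  - exists d'. split; auto. intros C. apply H2.
    eapply card_le_trans; [exact Hc|].
    eapply card_le_trans; [apply card_le_subset; intros u [_ h]; exact h|].
    exact (card_le_trans _ _ _ C (seg_le_img d Hd)).
Qed.

Lemma exists_infinite_seg : exists g, ltW g kap /\ infinite (seg ltW g).
Proof.
  destruct (card_le_or_ge_seg ltW ltW_wf ltW_total (inhabits 0) (seg ltW kap) (full nat))
    as [H|[d [Hd Hc]]].
  - exfalso. apply (proj1 hA). exact (card_le_trans _ _ _ kap_A H).
  - exists d. split; auto. eapply card_le_trans; [exact Hc|].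
    apply card_le_subset; intros u [_ h]; exact h.
Qed.

Fixpoint cofinal_seq (n : nat) : W :=
  match n with
  | 0 => epsilon (inhabits kap) (fun g => ltW g kap /\ infinite (seg ltW g))
  | S n => epsilon (inhabits kap)
             (fun d' => ltW d' kap /\ ~ card_le (seg ltW d') (seg ltW (cofinal_seq n)))
  end.

Lemma cofinal_seq_spec (n : nat) :
  ltW (cofinal_seq n) kap /\ ~ card_le (seg ltW (cofinal_seq (S n))) (seg ltW (cofinal_seq n)).
Proof.
  assert (Hlt : forall n, ltW (cofinal_seq n) kap).
  { clear n. intros n. induction n as [|m IH].
    - exact (proj1 (epsilon_spec _ _ exists_infinite_seg)).
    - exact (proj1 (epsilon_spec (inhabits kap) _ (exists_larger_seg _ IH))). }
  split; [apply Hlt|].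
  exact (proj2 (epsilon_spec (inhabits kap) _ (exists_larger_seg _ (Hlt n)))).
Qed.

Lemma cofinal_seq_lt (n m : nat) : n < m -> ltW (cofinal_seq n) (cofinal_seq m).
Proof.
  intros H. induction H; [|eapply ltW_trans; [exact IHle|]];
    apply lt_of_not_seg_le, cofinal_seq_spec.
Qed.

Lemma cofinal_seq_infinite (n : nat) : infinite (seg ltW (cofinal_seq n)).
Proof.
  assert (H0 : infinite (seg ltW (cofinal_seq 0)))
    by exact (proj2 (epsilon_spec _ _ exists_infinite_seg)).
  destruct n as [|n]; [exact H0|].
  eapply card_le_trans; [exact H0|]. apply seg_le_of_le. left. apply cofinal_seq_lt. lia.
Qed.

(* Otherwise the [img (cofinal_seq n)] would be infinitely many pairwise non-equipotent
   infinite subsets of the small set [img d]. *)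
Lemma cofinal_seq_unbounded (d : W) : ltW d kap -> exists n, ltW d (cofinal_seq n).
Proof.
  intros Hd. apply NNPP; intros N.
  assert (Hle : forall n, ltW (cofinal_seq n) d \/ cofinal_seq n = d).
  { intros n. destruct (ltW_total (cofinal_seq n) d) as [h|[h|h]]; auto. exfalso; apply N; eauto. }
  destruct (proj2 (proj2 hA) (img d) (img_lt d Hd)) as [l Hl].
  assert (HX : forall n, exists Y, In Y l /\ card_eq (img (cofinal_seq n)) Y).
  { intros n. apply Hl.
    - intros a [u [Hu E]]. exists u; split; auto.
      destruct (Hle n) as [h|h]; [eauto|subst; auto].
    - eapply card_le_trans; [apply cofinal_seq_infinite|apply seg_le_img, cofinal_seq_spec]. }
  destruct (pigeonhole_list l _ HX) as [a [b [Y [Hab [Ea Eb]]]]].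
  apply (proj2 (cofinal_seq_spec a)).
  eapply card_le_trans; [apply seg_le_of_le|].
  { destruct (Nat.eq_dec (S a) b) as [<-|h]; [right; reflexivity|left; apply cofinal_seq_lt; lia]. }
  eapply card_le_trans; [apply seg_le_img, cofinal_seq_spec|].
  eapply card_le_trans; [apply card_eq_le, Eb|].
  eapply card_le_trans; [apply (card_eq_ge (inhabits (psi d)) _ _ Ea)|].
  apply img_le_seg.
Qed.

Lemma not_card_le_ctbl_subsets_of_min : ~ card_le (ctbl_subsets (full A)) (full A).
Proof.
  destruct kap_A as [io [Hio io_inj]].
  apply (not_card_le_ctbl_subsets (fun n => seg ltW (cofinal_seq n)) io).
  - intros s t E. exact (io_inj s t I I E).
  - intros t. apply cofinal_seq_unbounded, Hio. exact I.
  - intros n. apply (card_idem_seg ltW (proj1 hW)), cofinal_seq_infinite.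
  - intros n. apply kap_min, cofinal_seq_spec.
Qed.

End Cofinality.

Lemma konig_aleph_omega : ~ card_le (ctbl_subsets (full A)) (full A).
Proof.
  destruct (infinite_of_not_countable _ (proj1 hA)) as [e _].
  destruct (succ_card_order_seg ltW hW (inhabits (e 0))) as [k Hk].
  destruct (well_founded_min ltW ltW_wf (fun k => card_le (full A) (seg ltW k)) k Hk)
    as [kap [H1 H2]].
  exact (not_card_le_ctbl_subsets_of_min kap H1 H2).
Qed.

End AlephOmega.

Lemma pset_nat_square_le :
  card_le (prodp (full (pset nat)) (full (pset nat))) (full (pset nat)).
Proof.
  exists (fun p n => if Nat.even n then fst p (Nat.div2 n) else snd p (Nat.div2 n)).
  split; [intros; exact I|].
  intros [P Q] [P' Q'] _ _ E. f_equal; apply functional_extensionality; intros k.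
  - pose proof (equal_f E (2 * k)) as H. cbv beta in H.
    rewrite Nat.even_even, Nat.div2_even in H. exact H.
  - pose proof (equal_f E (2 * k + 1)) as H. cbv beta in H.
    rewrite Nat.even_odd, Nat.div2_odd' in H. exact H.
Qed.

Lemma card_le_subsets_pset {T U : Type} (y : pset T) (en : U -> T) :
  (forall a, y a -> exists n, en n = a) -> card_le (fun x => subset x y) (full (pset U)).
Proof.
  intros Hen. exists (fun x n => x (en n)). split; [intros; exact I|].
  intros x x' Hx Hx' E. apply pset_ext. intros a.
  split; intros Ha; [destruct (Hen a (Hx a Ha)) as [n <-]|destruct (Hen a (Hx' a Ha)) as [n <-]].
  - change ((fun n => x' (en n)) n). rewrite <- E. exact Ha.
  - change ((fun n => x (en n)) n). rewrite E. exact Ha.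
Qed.

Fixpoint closure_iter {T : Type} (G : T -> pset T) (N : pset T) (k : nat) : pset T :=
  match k with
  | 0 => N
  | S k => fun z => closure_iter G N k z \/ bigU (closure_iter G N k) G z
  end.

Definition closure {T : Type} (G : T -> pset T) (N : pset T) : pset T :=
  bigU (full nat) (closure_iter G N).

Lemma closure_incl {T : Type} (G : T -> pset T) (N : pset T) : subset N (closure G N).
Proof. intros z Hz. exists 0. split; [exact I|exact Hz]. Qed.

Lemma closure_closed {T : Type} (G : T -> pset T) (N : pset T) (y : T) :
  closure G N y -> subset (G y) (closure G N).
Proof.
  intros [k [_ Hy]] z Hz. exists (S k). split; [exact I|]. right. exists y; auto.
Qed.

Lemma closure_iter_subset {T : Type} (G : T -> pset T) (N E : pset T) (k : nat) :
  subset N E -> (forall y, E y -> subset (G y) E) -> subset (closure_iter G N k) E.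
Proof.
  intros HN HG. induction k as [|k IH]; [exact HN|].
  intros z [Hz|[y [Hy Hz]]]; [apply IH, Hz|exact (HG y (IH y Hy) z Hz)].
Qed.

Lemma closure_subset {T : Type} (G : T -> pset T) (N E : pset T) :
  subset N E -> (forall y, E y -> subset (G y) E) -> subset (closure G N) E.
Proof. intros HN HG z [k [_ Hz]]. exact (closure_iter_subset G N E k HN HG z Hz). Qed.

Lemma card_le_closure {T U : Type} (iT : inhabited T) (G : T -> pset T) (N E : pset T)
  (Z : pset U) :
  card_idem Z -> subset N E -> (forall y, E y -> subset (G y) E) ->
  card_le N Z -> (forall y, E y -> card_le (G y) Z) -> card_le (closure G N) Z.
Proof.
  intros idem HN HG HNZ HGZ.
  apply (card_le_bigU_idem (inhabits 0)); [exact idem|exact (proj1 idem)|].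
  intros k _. induction k as [|k IH]; [exact HNZ|].
  apply card_le_union_idem; [exact idem|exact IH|].
  apply card_le_bigU_idem; [exact iT|exact idem|exact IH|].
  intros y Hy. apply HGZ, (closure_iter_subset G N E k HN HG), Hy.
Qed.

Lemma enumerate_levels {W O T : Type} (ltW : W -> W -> Prop) (E : pset T)
  (R : T -> pset T) (L : W -> pset T) :
  (forall a b, ltW a b \/ a = b \/ ltW b a) ->
  (forall al, card_eq (full O) (L al)) ->
  (forall be al z, ltW be al -> L be z -> L al z -> False) ->
  (forall x, E x <-> exists al, L al x) ->
  (forall al y z, L al y -> R y z -> exists be, (ltW be al \/ be = al) /\ L be z) ->
  exists a : W -> O -> T,
    (forall al j be i, a al j = a be i -> al = be /\ j = i) /\
    (forall x, E x <-> exists al j, a al j = x) /\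
    (forall al j z, R (a al j) z -> exists be i, (ltW be al \/ be = al) /\ z = a be i).
Proof.
  intros total Hcard Hdisj Hexh Hclosed.
  set (a := fun al => proj1_sig (constructive_indefinite_description _ (Hcard al))).
  assert (Ha : forall al, (forall j, full O j -> L al (a al j)) /\
               (forall i j, full O i -> full O j -> a al i = a al j -> i = j) /\
               (forall x, L al x -> exists j, full O j /\ a al j = x)).
  { intros al. exact (proj2_sig (constructive_indefinite_description _ (Hcard al))). }
  exists a. split; [|split].
  - intros al j be i Eq.
    pose proof (proj1 (Ha al) j I) as L1. pose proof (proj1 (Ha be) i I) as L2.
    rewrite Eq in L1.
    destruct (total al be) as [h|[<-|h]]; [exfalso; exact (Hdisj _ _ _ h L1 L2)| |
      exfalso; exact (Hdisj _ _ _ h L2 L1)].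
    split; [reflexivity|]. apply (proj1 (proj2 (Ha al))); auto; exact I.
  - intros x. rewrite Hexh. split.
    + intros [al Hal]. destruct (proj2 (proj2 (Ha al)) x Hal) as [j [_ Hj]]. eauto.
    + intros [al [j <-]]. exists al. apply (proj1 (Ha al)). exact I.
  - intros al j z Hz.
    destruct (Hclosed al _ z (proj1 (Ha al) j I) Hz) as [be [Hbe Hl]].
    destruct (proj2 (proj2 (Ha be)) z Hl) as [i [_ Hi]]. eauto.
Qed.

Section Levels.
Variables (hGCH : GCH) (A : Type) (hA : is_aleph_omega A)
  (W : Type) (ltW : W -> W -> Prop) (hW : is_succ_card_order ltW A)
  (O : Type) (ltO : O -> O -> Prop) (hO : is_omega1 ltO)
  (F : pset A -> pset (pset A))
  (hF : forall x, ctbl_subsets (full A) x ->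
          ctbl_inf (F x) /\ subset (F x) (ctbl_subsets (full A))).

Local Notation E := (ctbl_subsets (full A)).

Let ltW_wf : well_founded ltW := proj2 (proj2 (proj2 (proj1 hW))).

Let A_infinite : infinite (full A) := infinite_of_not_countable _ (proj1 hA).
Let O_infinite : infinite (full O) := infinite_of_not_countable _ (proj1 (proj2 hO)).

Lemma card_idem_A : card_idem (full A).
Proof. exact (succ_card_order_idem ltW hW A_infinite). Qed.

Lemma card_idem_O : card_idem (full O).
Proof.
  split; [exact O_infinite|].
  assert (O_PN := succ_card_order_le ltO (inhabits (full nat)) (full (pset nat)) hO cantor).
  eapply card_le_trans; [apply (card_le_prodp _ _ _ _ O_PN O_PN)|].
  eapply card_le_trans; [apply pset_nat_square_le|].
  exact (gch_pset_le hGCH ltO hO (card_le_refl _)).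
Qed.

Lemma card_le_O_A : card_le (full O) (full A).
Proof.
  destruct A_infinite as [e _].
  exact (succ_card_order_le ltO (inhabits (e 0)) (full A) hO (proj1 hA)).
Qed.

Definition gen (y : pset A) : pset (pset A) := bigU (ctbl_subsets y) F.

Lemma gen_subset (y : pset A) : subset (gen y) E.
Proof.
  intros z [x [[Hx _] Hz]]. exact (proj2 (hF x (conj Hx (fun _ _ => I))) z Hz).
Qed.

Lemma card_le_gen (y : pset A) : E y -> card_le (gen y) (full O).
Proof.
  intros [[en [_ [_ Hen]]] _].
  apply card_le_bigU_idem; [exact (inhabits (full A))|exact card_idem_O| |].
  - eapply card_le_trans; [apply (card_le_subset _ (fun x => subset x y))|].
    { intros x [_ Hx]; exact Hx. }
    eapply card_le_trans; [apply (card_le_subsets_pset y en)|].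
    { intros a Ha. destruct (Hen a Ha) as [n [_ <-]]. eauto. }
    exact (gch_pset_le hGCH ltO hO (card_le_refl _)).
  - intros x [Hx _]. eapply card_le_trans; [|exact O_infinite].
    exact (card_eq_ge (inhabits 0) _ _ (proj1 (hF x (conj Hx (fun _ _ => I))))).
Qed.

Let code_spec := constructive_indefinite_description _ (gch_pset_le hGCH ltW hW A_infinite).
Let code : pset A -> W := proj1_sig code_spec.
Let code_inj : forall x y, code x = code y -> x = y :=
  fun x y => proj2 (proj2_sig code_spec) x y I I.

Definition remainder (Bef : pset (pset A)) : pset (pset A) := fun z => E z /\ ~ Bef z.

(* Junk unless [remainder Bef] has [aleph_1] elements, which [card_le_O_remainder]
   guarantees for [Bef = Before al]. *)
Definition pick (Bef : pset (pset A)) : O -> pset A :=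
  epsilon (inhabits (fun _ => full A))
    (fun f => (forall j, full O j -> remainder Bef (f j)) /\
              (forall i j, full O i -> full O j -> f i = f j -> i = j)).

(* Level [al] is seeded with [aleph_1] new elements, so that it has the right size, and
   with the element of code [al], so that every element of [E] is eventually reached. *)
Definition seed (al : W) (Bef : pset (pset A)) : pset (pset A) :=
  fun z => E z /\ (code z = al \/ exists j, pick Bef j = z).

Definition earlier (al : W) (prev : forall be, ltW be al -> pset (pset A)) :
  pset (pset A) := fun z => exists be (h : ltW be al), prev be h z.

Definition level_step (al : W) (prev : forall be, ltW be al -> pset (pset A)) :
  pset (pset A) :=
  fun z => closure gen (seed al (earlier al prev)) z /\ ~ earlier al prev z.

Definition Level : W -> pset (pset A) := Fix ltW_wf (fun _ => pset (pset A)) level_step.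

Definition Before (al : W) : pset (pset A) := bigU (seg ltW al) Level.

Lemma Level_eq (al : W) :
  Level al = fun z => closure gen (seed al (Before al)) z /\ ~ Before al z.
Proof.
  assert (HB : earlier al (fun be _ => Level be) = Before al).
  { apply pset_ext. intros z. split; intros [be [h H]]; exists be;
      first [exact (conj h H)|exact (ex_intro _ h H)]. }
  unfold Level at 1. rewrite Fix_unfold. fold Level. unfold level_step.
  rewrite HB. reflexivity.
Qed.

Lemma card_le_seed (al : W) (Bef : pset (pset A)) : card_le (seed al Bef) (full O).
Proof.
  destruct O_infinite as [e _].
  eapply card_le_trans; [apply (card_le_subset _ (fun z =>
    code z = al \/ exists j, pick Bef j = z)); intros z [_ H]; exact H|].
  apply card_le_union_idem; [exact card_idem_O| |].
  - exists (fun _ => e 0). split; [intros; exact I|].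
    intros x y Hx Hy _. apply code_inj. congruence.
  - apply (card_le_of_surj (inhabits (e 0)) (full O) _ (pick Bef)).
    intros z [j Hj]. exists j; split; [exact I|exact Hj].
Qed.

Lemma Level_subset_E (al : W) : subset (Level al) E.
Proof.
  rewrite Level_eq. intros z [Hz _]. revert z Hz.
  apply closure_subset; [intros z [Hz _]; exact Hz|].
  intros y _. apply gen_subset.
Qed.

Lemma card_le_Level (al : W) : card_le (Level al) (full O).
Proof.
  rewrite Level_eq. eapply card_le_trans; [apply card_le_subset; intros z [Hz _]; exact Hz|].
  apply (card_le_closure (inhabits (full A)) gen _ E); auto using card_idem_O.
  - intros z [Hz _]; exact Hz.
  - intros y _. apply gen_subset.
  - apply card_le_seed.
  - apply card_le_gen.
Qed.

Lemma card_le_Before (al : W) : card_le (Before al) (full A).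
Proof.
  apply (card_le_bigU_idem (inhabits al)); [exact card_idem_A|apply (proj2 (proj2 hW))|].
  intros be _. exact (card_le_trans _ _ _ (card_le_Level be) card_le_O_A).
Qed.

(* [Before al] has size at most [aleph_omega] while [E] is larger by Koenig. *)
Lemma card_le_O_remainder (al : W) : card_le (full O) (remainder (Before al)).
Proof.
  apply (succ_card_order_le ltO (inhabits (full A)) _ hO). intros H.
  apply (konig_aleph_omega A hA W ltW hW).
  eapply card_le_trans;
    [apply (card_le_subset _ (fun z => Before al z \/ remainder (Before al) z))|].
  { intros z Hz. destruct (classic (Before al z)); [left; auto|right; split; auto]. }
  apply card_le_union_idem; [exact card_idem_A|apply card_le_Before|].
  exact (card_le_trans _ _ _ H A_infinite).
Qed.

Lemma Level_card_eq (al : W) : card_eq (full O) (Level al).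
Proof.
  apply (schroeder_bernstein (inhabits (full A))); [|apply card_le_Level].
  destruct (epsilon_spec (inhabits (fun _ => full A)) _ (card_le_O_remainder al))
    as [Hpick pick_inj].
  exists (pick (Before al)). split; [|exact pick_inj].
  intros j _. rewrite Level_eq. destruct (Hpick j I) as [Ej Nj]. split; [|exact Nj].
  apply closure_incl. split; [exact Ej|right; exists j; reflexivity].
Qed.

Lemma Level_disjoint (be al : W) (z : pset A) : ltW be al -> Level be z -> Level al z -> False.
Proof. intros H1 H2 H3. rewrite Level_eq in H3. apply (proj2 H3). exists be; auto. Qed.

Lemma Level_closed (al : W) (y z : pset A) :
  Level al y -> gen y z -> exists be, (ltW be al \/ be = al) /\ Level be z.
Proof.
  intros Hy Hz. rewrite Level_eq in Hy. destruct Hy as [Hy _].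
  destruct (classic (Before al z)) as [[be [Hbe Hl]]|N]; [eauto|].
  exists al. split; [right; reflexivity|]. rewrite Level_eq.
  split; [exact (closure_closed _ _ y Hy z Hz)|exact N].
Qed.

Lemma Level_exhaustive (x : pset A) : E x <-> exists al, Level al x.
Proof.
  split; [|intros [al Hal]; exact (Level_subset_E al x Hal)].
  intros Ex. destruct (classic (Before (code x) x)) as [[be [_ Hl]]|N]; [eauto|].
  exists (code x). rewrite Level_eq. split; [|exact N].
  apply closure_incl. split; [exact Ex|left; reflexivity].
Qed.

Lemma exists_levels : exists L : W -> pset (pset A),
  (forall al, card_eq (full O) (L al)) /\
  (forall be al z, ltW be al -> L be z -> L al z -> False) /\
  (forall x, E x <-> exists al, L al x) /\
  (forall al y z, L al y -> gen y z -> exists be, (ltW be al \/ be = al) /\ L be z).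
Proof.
  exists Level. split; [exact Level_card_eq|].
  split; [exact Level_disjoint|split; [exact Level_exhaustive|exact Level_closed]].
Qed.

End Levels.

Theorem lemma8 (hGCH : GCH)
  (A : Type) (hA : is_aleph_omega A)
  (W : Type) (ltW : W -> W -> Prop) (hW : is_succ_card_order ltW A)
  (O : Type) (ltO : O -> O -> Prop) (hO : is_omega1 ltO)
  (F : pset A -> pset (pset A))
  (hF : forall x, ctbl_subsets (full A) x ->
          ctbl_inf (F x) /\ subset (F x) (ctbl_subsets (full A))) :
  exists a : W -> O -> pset A,
    (forall al j be i, a al j = a be i -> al = be /\ j = i) /\
    (forall x, ctbl_subsets (full A) x <-> exists al j, a al j = x) /\
    (forall al j x, ctbl_subsets (a al j) x ->
       forall y, F x y ->
         exists eta i, (ltW eta al \/ eta = al) /\ y = a eta i).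
Proof.
  destruct (exists_levels hGCH A hA W ltW hW O ltO hO F hF)
    as [L [L_card [L_disjoint [L_exhaustive L_closed]]]].
  destruct (enumerate_levels ltW _ _ L (proj1 (proj2 (proj2 (proj1 hW))))
              L_card L_disjoint L_exhaustive L_closed) as [a [a_inj [a_onto a_closed]]].
  exists a. split; [exact a_inj|split; [exact a_onto|]].
  intros al j x Hx y Hy. exact (a_closed al j y (ex_intro _ x (conj Hx Hy))).
Qed.
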